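(* Let $N>0$, let $\langle k\rangle>1$ (the average node degree), and let $\beta>0$, $\gamma\ge 0$, $p\ge 0$ be parameters. Consider the mean-field ODE system in which the numbers of susceptible nodes $S$, infected nodes $I$, active susceptible–susceptible edges $[SS]$ and active susceptible–infected edges $[SI]$ satisfy $$\dot S=-\beta[SI],\qquad \dot I=\beta[SI]-\gamma I,$$ $$\dot{[SI]}=\beta\left(\frac{\langle k\rangle-1}{\langle k\rangle}\,\frac{[SS][SI]-[SI]^2}{S}-[SI]\right)-(\gamma+p)[SI],$$ with initial data depending on $I_0\in(0,N/4)$ given by $S(0)=N-I_0$, $I(0)=I_0$, $[SI](0)=\langle k\rangle I_0$, $[SS](0)=\frac{\langle k\rangle N}{2}-\langle k\rangle I_0$. Then $$\lim_{I_0\to 0}\frac{1}{I_0}\dot{[SI]}(0)=\beta\left(\frac{\langle k\rangle^2}{2}-\frac32\langle k\rangle\right)-(\gamma+p)\langle k\rangle,$$ and, setting $$p_1^*=\beta\left(\frac{\langle k\rangle}{2}-\frac32\right)-\gamma,$$ if $p>p_1^*$ then $\lim_{I_0\to 0}\frac{1}{I_0}\ddot S(0)>0$ (where $\ddot S(0)$ is computed from the system above, i.e. $\ddot S(0)=-\beta\,\dot{[SI]}(0)$).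
   Context: This is an SIR epidemic on an adaptive network with temporary link deactivation: susceptible–infected edges are deactivated at rate $p$, infection occurs at rate $\beta$ along active $[SI]$ edges, and infected nodes recover at rate $\gamma$. The equation for $[SI]$ arises from the edge equation $\dot{[SI]}=\beta[SSI]-\beta([SI]+[ISI])-\gamma[SI]-p[SI]$ closed by the moment closure $[ABC]\approx\frac{\langle k\rangle-1}{\langle k\rangle}\frac{[AB][BC]}{B}$ for triple links. The total number of edges is $\bar N=\langle k\rangle N/2=[SS](0)+[SI](0)$. *)

From HB Require Import structures.
From mathcomp Require Import all_boot all_order all_algebra.
From mathcomp Require Import all_classical all_reals all_analysis.
Set Implicit Arguments. Unset Strict Implicit. Unset Printing Implicit Defensive.
Import Order.TTheory GRing.Theory Num.Theory.
Import numFieldNormedType.Exports.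
Local Open Scope ring_scope.

Definition SI_rhs {R : realType} (beta gamma p k S SS SI : R) : R :=
  beta * ((k - 1) / k * ((SS * SI - SI ^+ 2) / S) - SI) - (gamma + p) * SI.

Definition S_init {R : realType} (N I0 : R) : R := N - I0.
Definition SS_init {R : realType} (k N I0 : R) : R := k * N / 2 - k * I0.
Definition SI_init {R : realType} (k I0 : R) : R := k * I0.

Definition dSI0 {R : realType} (N k beta gamma p I0 : R) : R :=
  SI_rhs beta gamma p k (S_init N I0) (SS_init k N I0) (SI_init k I0).

(* d^2 S/dt^2 at t = 0: since dS/dt = -beta [SI], S'' = -beta [SI]'. *)
Definition ddS0 {R : realType} (N k beta gamma p I0 : R) : R :=
  - beta * dSI0 N k beta gamma p I0.

Definition p1_star {R : realType} (k beta gamma : R) : R :=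
  beta * (k / 2 - 3 / 2) - gamma.

From HB Require Import structures.
From mathcomp Require Import all_boot all_order all_algebra.
From mathcomp Require Import all_classical all_reals all_analysis.
From mathcomp Require Import ring.
Import Order.TTheory GRing.Theory Num.Theory.
Import numFieldNormedType.Exports.
Local Open Scope classical_set_scope.
Local Open Scope ring_scope.

(* With [SI](0) = k I0, the quotient dSI0 / I0 is a rational function of I0
   that is continuous at 0, where it takes the value k (p1* - p).  The sign of
   S''(0) / I0 = - beta dSI0 / I0 in the limit is therefore that of p - p1*. *)

Section InitialGrowthRate.
Variables (R : realType) (N k beta gamma p : R).
Hypotheses (N_gt0 : 0 < N) (k_neq0 : k != 0).

Lemma dSI0_divE (I0 : R) : I0 != 0 -> I0 != N ->
  dSI0 N k beta gamma p I0 / I0 =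
  beta * ((k - 1) * (k * N / 2 - 2 * k * I0) / (N - I0) - k) - (gamma + p) * k.
Proof.
move=> I0_neq0 I0_neqN.
have NI0_neq0 : N - I0 != 0 by rewrite subr_eq0 eq_sym.
rewrite /dSI0 /SI_rhs /S_init /SS_init /SI_init.
by field; rewrite I0_neq0 k_neq0 NI0_neq0.
Qed.

Lemma p1_star_rateE :
  beta * (k ^+ 2 / 2 - 3 / 2 * k) - (gamma + p) * k = k * (p1_star k beta gamma - p).
Proof. by rewrite /p1_star; ring. Qed.

Lemma dSI0_div_cvg :
  (fun I0 => dSI0 N k beta gamma p I0 / I0) @ 0^'+ --> k * (p1_star k beta gamma - p).
Proof.
pose rate x := beta * ((k - 1) * (k * N / 2 - 2 * k * x) / (N - x) - k) - (gamma + p) * k.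
have rate0 : rate 0 = k * (p1_star k beta gamma - p).
  by rewrite -p1_star_rateE /rate; field; rewrite gt_eqF.
have rate_cont : rate x @[x --> 0^'+] --> rate 0.
  apply: cvg_at_right_filter; apply: cvgB; last exact: cvg_cst.
  apply: cvgMl_tmp; apply: cvgB; last exact: cvg_cst.
  apply: cvgM.
    apply: cvgMl_tmp; apply: cvgB; first exact: cvg_cst.
    by apply: cvgMl_tmp; exact: cvg_id.
  apply: cvgV; first by rewrite subr0 gt_eqF.
  by apply: cvgB; [exact: cvg_cst | exact: cvg_id].
rewrite -rate0; apply: cvg_trans rate_cont; apply: near_eq_cvg.
near=> x.
have x_gt0 : 0 < x by near: x; exact: nbhs_right_gt.
have x_ltN : x < N by near: x; exact: nbhs_right_lt.
by rewrite dSI0_divE ?(gt_eqF x_gt0) ?(lt_eqF x_ltN).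
Unshelve. all: by end_near.
Qed.

End InitialGrowthRate.

Theorem mainTheorem1 (R : realType) (N k beta gamma p : R) :
  0 < N -> 1 < k -> 0 < beta -> 0 <= gamma -> 0 <= p ->
  ((fun I0 => dSI0 N k beta gamma p I0 / I0) @ 0^'+ -->
      beta * (k ^+ 2 / 2 - 3 / 2 * k) - (gamma + p) * k)
  /\
  (p1_star k beta gamma < p ->
     exists l : R,
       ((fun I0 => ddS0 N k beta gamma p I0 / I0) @ 0^'+ --> l) /\ 0 < l).
Proof.
move=> N_gt0 k_gt1 beta_gt0 _ _.
have k_gt0 : 0 < k by apply: lt_trans k_gt1.
have dSI0_cvg := @dSI0_div_cvg R N k beta gamma p N_gt0 (lt0r_neq0 k_gt0).
rewrite p1_star_rateE; split => // p_gt_p1.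
exists (- beta * (k * (p1_star k beta gamma - p))); split.
  have -> : (fun I0 => ddS0 N k beta gamma p I0 / I0) =
             (fun I0 => - beta * (dSI0 N k beta gamma p I0 / I0)).
    by apply/funext => I0; rewrite /ddS0 mulrA.
  exact: cvgMl_tmp.
rewrite mulNr -mulrN -mulrN opprB.
by apply: mulr_gt0 => //; apply: mulr_gt0 => //; rewrite subr_gt0.
Qed.
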